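(* Let $D_{d,k}$ be a partial DCell, and let $\alpha'=\alpha_k\cdots\alpha_{l+2}$ with $3\le l+2\le k$. If $m$ is the largest integer such that $D_{d,l}^{\alpha'm}$ is non-empty, then $D_{d,l}^{\alpha'i}$ and $D_{d,l}^{\alpha'j}$ are linked for all $i,j$ with $0\le i<j<m$, and $D_{d,l}^{\alpha'm}$ is linked to at least $\min\{m,t_1\}$ of the sub-partial $DCell_l$s $D_{d,l}^{\alpha'i}$.
   Context: DCell with parameter $n\ge2$: $DCell_0=D_0=K_n$, $t_0=n$; for $j\ge1$, $D_j$ consists of $t_{j-1}+1$ vertex-disjoint copies $D_{j-1}^0,\dots,D_{j-1}^{t_{j-1}}$ of $D_{j-1}$ plus level $j$ edges, and $t_j=t_{j-1}(t_{j-1}+1)$ (so $t_1=n(n+1)$). A vertex of $D_k$ has label $(\alpha_k,\dots,\alpha_1,\alpha_0)$, where $\alpha_j\in\{0,\dots,t_{j-1}\}$ is the index of the copy of $D_{j-1}$ inside the containing $D_j$ and $\alpha_0\in\{0,\dots,n-1\}$; $uid_{j}=\alpha_0+\sum_{l=1}^{j}\alpha_l t_{l-1}$. For $a<b$, the vertex with $uid_{j-1}=b-1$ in $D_{j-1}^a$ is joined to the vertex with $uid_{j-1}=a$ in $D_{j-1}^b$. Enumeration: for $k\ge2$ put $a_i=t_{i-1}+1$ ($2\le i\le k$), $A=[a_k]\times\cdots\times[a_2]$ with $[a]=\{0,\dots,a-1\}$; $\alpha=\alpha_k\cdots\alpha_2\in A$ identifies the copy of $DCell_1$ consisting of the vertices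 with labels $(\alpha_k,\dots,\alpha_2,\cdot,\cdot)$. Prefixes of $\alpha$ are $\alpha_k\cdots\alpha_{l+1}$ ($2\le l+1\le k$), $\varnothing$ is the empty prefix, and $\beta i$ denotes appending $i$. An array $\phi:A\to\{0,1\}$ starts at $0$; a tuple $\beta$ is non-empty if some $\alpha$ with prefix (or equal to) $\beta$ has $\phi(\alpha)=1$, empty otherwise, full if all such $\alpha$ have $\phi(\alpha)=1$. Next$(\beta)$, $\beta=\alpha_k\cdots\alpha_{l+1}$ ($l=k$ if $\beta=\varnothing$): let $m$ be the least $i$ with $\beta i$ empty; if $l=2$ set $\phi(\beta m):=1$ and stop; otherwise if $m\ge a_2$ replace $m$ by the least $i$ with $\beta i$ not full; then call Next$(\beta m)$. The partial DCell $D_{d,k}$ is the subgraph of $DCell_k$ induced by the vertices of the $DCell_1$s $\alpha$ with $\phi(\alpha)=1$ after $d$ calls of Next$(\varnothing)$. For a tuple $\beta=\alpha_k\cdots\alpha_{l+1}$, the sub-partial $DCell_l$ $D_{d,l}^{\beta}$ is the subgraph of $D_{d,k}$ induced by its vertices whose labels begin with $\beta$ (possibly empty). Two such subgraphs are linked if some edge of $D_{d,k}$ joins a vertex of one to a vertex of the other. *)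

From mathcomp Require Import all_boot.
Set Implicit Arguments. Unset Strict Implicit. Unset Printing Implicit Defensive.

Definition t (n j : nat) : nat := iter j (fun x => x * x.+1) n.

(* a_i = t_{i-1} + 1 (range size of alpha_i, i >= 1) *)
Definition a (n i : nat) : nat := (t n i.-1).+1.

(* A vertex of D_k is a label (alpha_k, ..., alpha_1, alpha_0), represented
   big-endian as a seq nat of size k+1; [alpha k v j] is alpha_j. *)
Definition alpha (k : nat) (v : seq nat) (j : nat) : nat := nth 0 v (k - j).

Definition is_vertex (n k : nat) (v : seq nat) : Prop :=
  [/\ size v = k.+1, alpha k v 0 < n &
      forall j, 1 <= j <= k -> alpha k v j <= t n j.-1].

Definition uid (n k : nat) (v : seq nat) (j : nat) : nat :=
  alpha k v 0 + \sum_(1 <= l < j.+1) alpha k v l * t n l.-1.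

(* Level-j edge (0 <= j <= k) between u and v in DCell_k:
   they agree on alpha_k..alpha_{j+1}; for j = 0 they differ in alpha_0
   (the complete graph K_n = D_0); for j >= 1, with a = alpha_j(u) < b =
   alpha_j(v), uid_{j-1}(u) = b-1 and uid_{j-1}(v) = a. *)
Definition level_edge (n k j : nat) (u v : seq nat) : Prop :=
  (forall p, j < p <= k -> alpha k u p = alpha k v p) /\
  (if j == 0 then alpha k u 0 <> alpha k v 0
   else alpha k u j < alpha k v j /\
        uid n k u j.-1 = (alpha k v j).-1 /\ uid n k v j.-1 = alpha k u j).

Definition dcell_adj (n k : nat) (u v : seq nat) : Prop :=
  is_vertex n k u /\ is_vertex n k v /\
  exists j, j <= k /\ (level_edge n k j u v \/ level_edge n k j v u).

(* Tuples alpha_k ... alpha_2 are seq nat (big-endian).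
   [completions n l] lists all suffixes alpha_l ... alpha_2 with
   alpha_j < a_j (for l <= 1 the only suffix is the empty one). *)
Fixpoint completions (n l : nat) : seq (seq nat) :=
  match l with
  | 0 => [:: [::]]
  | l'.+1 => if l' is 0 then [:: [::]]
             else [seq x :: c | x <- iota 0 (a n l), c <- completions n l']
  end.

(* The array phi : A -> {0,1} is represented by the list of the alpha's
   with phi(alpha) = 1. For a tuple gamma = alpha_k .. alpha_j: *)
Definition tuple_nonempty (n : nat) (phi : seq (seq nat)) (gamma : seq nat)
    (j : nat) : bool :=
  has (fun c => (gamma ++ c) \in phi) (completions n j.-1).

Definition tuple_full (n : nat) (phi : seq (seq nat)) (gamma : seq nat)
    (j : nat) : bool :=
  all (fun c => (gamma ++ c) \in phi) (completions n j.-1).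

(* Next(beta) for beta = alpha_k .. alpha_{l+1} (beta i has its last entry at
   level l).  The least i with beta i empty is searched among i < a_l (for
   i >= a_l, beta i is vacuously empty, so the result a_l means "none in
   range"); similarly for "not full".  When no admissible index remains in
   range (the whole structure below beta is full) the call does nothing. *)
Fixpoint next (n l : nat) (beta : seq nat) (phi : seq (seq nat))
    : seq (seq nat) :=
  match l with
  | 0 => phi
  | l'.+1 =>
    let m := find (fun i => ~~ tuple_nonempty n phi (rcons beta i) l)
                  (iota 0 (a n l)) in
    if l == 2 then (if m < a n 2 then rcons beta m :: phi else phi)
    else
      let m' := if m < a n 2 then m
                else find (fun i => ~~ tuple_full n phi (rcons beta i) l)
                          (iota 0 (a n l)) in
      if m' < a n l then next n l' (rcons beta m') phi else phi
  end.

Definition phi_d (n k d : nat) : seq (seq nat) :=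
  iter d (next n k [::]) [::].

(* Vertices of the partial DCell D_{d,k}: vertices of DCell_k lying in a
   DCell_1 alpha = alpha_k .. alpha_2 with phi(alpha) = 1. *)
Definition in_partial (n k d : nat) (v : seq nat) : Prop :=
  is_vertex n k v /\ take k.-1 v \in phi_d n k d.

Definition in_sub (n k d : nat) (beta v : seq nat) : Prop :=
  in_partial n k d v /\ take (size beta) v = beta.

Definition sub_nonempty (n k d : nat) (beta : seq nat) : Prop :=
  exists v, in_sub n k d beta v.

Definition linked (n k d : nat) (beta1 beta2 : seq nat) : Prop :=
  exists u v, [/\ in_sub n k d beta1 u, in_sub n k d beta2 v &
                  dcell_adj n k u v].

From Pilot Require Import Defs.
From mathcomp Require Import all_boot zify.
Set Implicit Arguments. Unset Strict Implicit. Unset Printing Implicit Defensive.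

(* Each call of Next appends one DCell_1, choosing its index digit by digit: at
   every level the least index whose subtree is empty, or, once that index
   reaches a_2 = t_1 + 1, the least index whose subtree is not full.  By
   induction on d the enumeration array therefore keeps three invariants: the
   non-empty children of a prefix form an initial segment, every child to the
   left of a non-empty child of index at least a_2 is full, and a non-empty
   prefix contains its all-zero completion.
   For i < j <= t_l, the level-(l+1) edge joins the vertex of copy i with
   uid_l = j - 1 to the vertex of copy j with uid_l = i.  An endpoint lies in
   D_(d,k) if its copy is full, or if its copy is non-empty and its uid is
   below t_1, since it then lies in the all-zero DCell_1 of the copy.  If
   m > t_1 all copies below m are full; otherwise every uid involved is below
   m <= t_1. *)

Lemma tS n j : t n j.+1 = t n j * (t n j).+1.
Proof. by []. Qed.

Lemma t_gt0 n j : 0 < n -> 0 < t n j.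
Proof. by move=> n_gt0; elim: j => [|j IHj] //; rewrite tS muln_gt0 IHj. Qed.

Lemma leq_t n i j : 0 < n -> i <= j -> t n i <= t n j.
Proof.
move=> n_gt0; apply: (homo_leq (f := t n) leqnn leq_trans) => h.
by rewrite tS leq_pmulr.
Qed.

Definition dcell1_index n k (y : seq nat) : Prop :=
  size y = k.-1 /\ forall q, q < k.-1 -> nth 0 y q < a n (k - q).

Lemma mem_completions n L c : c \in completions n L <-> dcell1_index n L c.
Proof.
elim: L c => [|[|L] IHL] c; try by rewrite /= inE; split=> [/eqP->|[]]; case: c.
have -> : completions n L.+2 =
    [seq x :: c | x <- iota 0 (a n L.+2), c <- completions n L.+1] by [].
split.
  case/allpairsPdep => [x [c' [x_lt /IHL [c'_size c'_lt] ->]]].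
  split=> [|[|q] q_lt /=]; first by rewrite /= c'_size.
    by rewrite mem_iota in x_lt; rewrite subn0; lia.
  by rewrite subSS; apply: c'_lt; lia.
case: c => [|x c] [xc_size c_lt] //; move: xc_size => [c_size].
apply/allpairsPdep; exists x, c; split => //.
  by rewrite mem_iota add0n -(subn0 L.+2); apply: (c_lt 0).
by apply/IHL; split=> // q q_lt; have := c_lt q.+1; rewrite subSS; apply; lia.
Qed.

Definition valid_prefix n k (g : seq nat) : Prop :=
  forall q, q < size g -> nth 0 g q < a n (k - q).

Definition has_prefix (phi : seq (seq nat)) (g : seq nat) : bool :=
  has (fun y => take (size g) y == g) phi.

Definition full_prefix n k (phi : seq (seq nat)) (g : seq nat) : Prop :=
  forall y, dcell1_index n k y -> take (size g) y = g -> y \in phi.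

Lemma has_prefix_take phi g g' :
  size g <= size g' -> take (size g) g' = g -> has_prefix phi g' -> has_prefix phi g.
Proof.
move=> le_gg' g'g /hasP [y y_phi /eqP yg']; apply/hasP; exists y => //.
by rewrite -{2}g'g -yg' take_takel.
Qed.

Lemma has_prefix_rcons phi g i : has_prefix phi (rcons g i) -> has_prefix phi g.
Proof. by apply: has_prefix_take; rewrite ?size_rcons // -cats1 take_size_cat. Qed.

Lemma has_prefix_cons phi x g :
  has_prefix (x :: phi) g = (take (size g) x == g) || has_prefix phi g.
Proof. by []. Qed.

Lemma full_prefix_cons n k phi x g : full_prefix n k phi g -> full_prefix n k (x :: phi) g.
Proof. by move=> g_full y y_idx yg; rewrite inE (g_full y y_idx yg) orbT. Qed.

Lemma tuple_nonempty_has_prefix n phi g j : tuple_nonempty n phi g j -> has_prefix phi g.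
Proof. by case/hasP=> c _ gc_phi; apply/hasP; exists (g ++ c); rewrite ?take_size_cat. Qed.

Lemma tuple_full_prefix n k phi g j : size g + j = k.+1 -> 2 <= j ->
  tuple_full n phi g j -> full_prefix n k phi g.
Proof.
move=> gj_size j_ge2 /allP g_full y [y_size y_lt] yg.
rewrite -(cat_take_drop (size g) y) yg; apply/g_full/mem_completions.
split=> [|q q_lt]; first by rewrite size_drop y_size; lia.
rewrite nth_drop; have := y_lt (size g + q).
by rewrite (_ : k - (size g + q) = j.-1 - q); [apply; lia | lia].
Qed.

Lemma full_prefix_has_prefix n k phi g : size g <= k.-1 -> valid_prefix n k g ->
  full_prefix n k phi g -> has_prefix phi g.
Proof.
move=> g_size g_lt g_full; apply/hasP; exists (g ++ nseq (k.-1 - size g) 0).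
  apply: g_full; rewrite ?take_size_cat //; split=> [|q q_lt].
    by rewrite size_cat size_nseq; lia.
  by rewrite nth_cat; case: ifP => [/g_lt //|_]; rewrite nth_nseq if_same.
by rewrite take_size_cat.
Qed.

Lemma valid_prefix_rcons n k g c :
  valid_prefix n k g -> c < a n (k - size g) -> valid_prefix n k (rcons g c).
Proof.
move=> g_valid c_lt q; rewrite size_rcons ltnS leq_eqVlt nth_rcons.
by case/orP=> [/eqP-> | q_lt]; rewrite ?ltnn ?eqxx // q_lt; apply: g_valid.
Qed.

Definition greedy_choice n k phi g c : Prop :=
  [/\ c < a n (k - size g),
      ~~ has_prefix phi (rcons g c) ->
        (forall i, i < c -> has_prefix phi (rcons g i)) /\
        (a n 2 <= c -> forall i, i < c -> full_prefix n k phi (rcons g i))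
    & ~~ has_prefix phi g -> c = 0].

Lemma greedy_choice_intro n k phi g m c :
  size g < k.-1 -> valid_prefix n k g ->
  (forall i, i < m -> has_prefix phi (rcons g i)) -> c < a n (k - size g) ->
  (c = m /\ m < a n 2) \/
    (a n 2 <= m /\ forall i, i < c -> full_prefix n k phi (rcons g i)) ->
  greedy_choice n k phi g c.
Proof.
move=> g_size g_valid below_m c_lt choice; split=> // [_ | g_empty].
  case: choice => [[-> m_lt] | [m_ge below_c_full]]; split=> //.
    by move=> m_ge; have := leq_trans m_ge m_lt; rewrite ltnn.
  move=> i i_lt; apply: full_prefix_has_prefix (below_c_full i i_lt); first by rewrite size_rcons.
  by apply: valid_prefix_rcons => //; apply: leq_trans i_lt (ltnW c_lt).
have m0 : m = 0.
  case: m below_m {choice} => // m below_m; case/negP: g_empty.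
  exact/(has_prefix_rcons (i := 0))/below_m.
by case: choice => [[-> _] // | [m_ge _]]; move: m_ge; rewrite m0 /a ltn0.
Qed.

Lemma before_find_iota (P : pred nat) A i : i < find (fun j => ~~ P j) (iota 0 A) -> P i.
Proof.
move=> i_lt; have i_lt_A : i < A.
  by apply: leq_trans i_lt _; rewrite -{2}(size_iota 0 A) find_size.
by have := before_find 0 i_lt; rewrite /= nth_iota // add0n => /negPn.
Qed.

Lemma take_rcons_eq (x g : seq nat) c : take (size g).+1 x = rcons g c ->
  take (size g) x = g /\ nth 0 x (size g) = c.
Proof.
move=> xgc; split; first by rewrite -(take_takel x (leqnSn _)) xgc -cats1 take_size_cat.
by rewrite -(nth_take 0 (ltnSn (size g))) xgc nth_rcons ltnn eqxx.
Qed.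

Lemma next_appends n k l beta phi : 2 <= l -> l <= k -> size beta = k - l ->
  valid_prefix n k beta ->
  Defs.next n l beta phi = phi \/
  exists x, [/\ Defs.next n l beta phi = x :: phi, size x = k.-1, take (k - l) x = beta &
     forall p, k - l <= p < k.-1 -> greedy_choice n k phi (take p x) (nth 0 x p)].
Proof.
elim: l beta => [//|l IHl] beta l_ge2 l_le beta_size beta_valid; cbn [Defs.next].
set A := a n l.+1; set m := find _ (iota 0 A).
have A_eq : a n (k - size beta) = A by rewrite beta_size /A; congr (a n _); lia.
have below_m i : i < m -> has_prefix phi (rcons beta i).
  by move/before_find_iota; apply: tuple_nonempty_has_prefix.
have beta_lt : size beta < k.-1 by rewrite beta_size; lia.
case: ifP => [/eqP [l1] | l_ne1].
  case: ifP => m_lt; [right | by left].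
  exists (rcons beta m); split=> //.
  - by rewrite size_rcons beta_size l1; lia.
  - by rewrite -beta_size -cats1 take_size_cat.
  move=> p p_range; have -> : p = size beta by rewrite beta_size; lia.
  rewrite -cats1 take_size_cat // nth_cat ltnn subnn.
  by apply: (greedy_choice_intro beta_lt beta_valid below_m); [rewrite /= A_eq /A l1 | left].
set c := if m < a n 2 then m else _.
case: ifP => c_lt; last by left.
have choice : greedy_choice n k phi beta c.
  apply: (greedy_choice_intro beta_lt beta_valid below_m); first by rewrite A_eq.
  rewrite /c; case: ifP => m_lt; [by left | right; split; first by rewrite leqNgt m_lt].
  move=> i /before_find_iota; apply: tuple_full_prefix => //.
  by rewrite size_rcons beta_size; lia.
have betac_size : size (rcons beta c) = k - l by rewrite size_rcons beta_size; lia.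
have betac_valid : valid_prefix n k (rcons beta c) by apply: valid_prefix_rcons; rewrite ?A_eq.
have [-> | [x [-> x_size x_take x_choice]]] :=
  IHl (rcons beta c) ltac:(lia) (ltnW l_le) betac_size betac_valid; first by left.
have [x_beta x_c] : take (size beta) x = beta /\ nth 0 x (size beta) = c.
  by apply: take_rcons_eq; rewrite -(size_rcons beta c) betac_size.
right; exists x; split=> //; first by rewrite -beta_size.
move=> p p_range; have [-> | p_gt] := eqVneq p (size beta); first by rewrite x_beta x_c.
by apply: x_choice; lia.
Qed.

Record enum_invariant n k (phi : seq (seq nat)) : Prop := EnumInvariant {
  has_prefix_down : forall g i j,
    i < j -> has_prefix phi (rcons g j) -> has_prefix phi (rcons g i);
  full_prefix_down : forall g i j,
    i < j -> a n 2 <= j -> has_prefix phi (rcons g j) -> full_prefix n k phi (rcons g i);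
  zero_completion_mem : forall g,
    has_prefix phi g -> g ++ nseq (k.-1 - size g) 0 \in phi }.

Section GreedyAppend.

Variables (n k : nat) (phi : seq (seq nat)) (x : seq nat).
Hypothesis x_size : size x = k.-1.
Hypothesis x_greedy : forall p, p < k.-1 -> greedy_choice n k phi (take p x) (nth 0 x p).

Lemma greedy_choice_prefix g j :
  take (size g).+1 x = rcons g j -> greedy_choice n k phi g j.
Proof.
move=> xgj; have [x_g x_j] := take_rcons_eq xgj.
have g_lt : size g < k.-1.
  have := congr1 size xgj; rewrite size_take size_rcons x_size.
  by case: ltnP => ? ?; lia.
by have := x_greedy g_lt; rewrite x_g x_j.
Qed.

Lemma zero_completion_new g : take (size g) x = g -> ~~ has_prefix phi g ->
  g ++ nseq (k.-1 - size g) 0 = x.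
Proof.
move=> x_g g_empty; have g_le : size g <= k.-1 by rewrite -x_size -x_g size_take_min geq_minr.
rewrite -[RHS](cat_take_drop (size g) x) x_g; congr (_ ++ _).
apply: (@eq_from_nth _ 0); first by rewrite size_nseq size_drop x_size.
move=> q; rewrite size_nseq => q_lt; rewrite nth_nseq q_lt nth_drop.
have gq_lt : size g + q < k.-1 by lia.
have [_ _ prefix_empty] := x_greedy gq_lt.
symmetry; apply: prefix_empty; apply: contra g_empty; apply: has_prefix_take.
  by rewrite size_takel ?x_size; lia.
by rewrite take_takel ?leq_addr.
Qed.

Lemma enum_invariant_cons : enum_invariant n k phi -> enum_invariant n k (x :: phi).
Proof.
case=> down full zero; split=> [g i j ij | g i j ij j_ge | g].
- rewrite !has_prefix_cons size_rcons; case: (boolP (has_prefix phi (rcons g j))).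
    by move=> gj_ne _; rewrite (down g i j ij gj_ne) orbT.
  move=> gj_empty /orP [/eqP/greedy_choice_prefix [_ /(_ gj_empty) [-> //] _ _] | //].
  by rewrite orbT.
- rewrite has_prefix_cons size_rcons; case: (boolP (has_prefix phi (rcons g j))).
    by move=> gj_ne _; apply/full_prefix_cons/(full g i j).
  move=> gj_empty /orP [/eqP/greedy_choice_prefix [_ /(_ gj_empty) [_ gj_full] _] | //].
  exact/full_prefix_cons/gj_full.
rewrite has_prefix_cons inE; case: (boolP (has_prefix phi g)) => [/zero -> | g_empty].
  by rewrite !orbT.
by rewrite orbF => /eqP/zero_completion_new-> //; rewrite eqxx.
Qed.

End GreedyAppend.

Lemma enum_invariant_phi_d n k d : 2 <= k -> enum_invariant n k (phi_d n k d).
Proof.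
move=> k_ge2; elim: d => [|d IHd]; first by split=> // g; rewrite /has_prefix.
rewrite /phi_d iterS -/(phi_d n k d).
have nil_valid : valid_prefix n k [::] by [].
have [-> // | [x [-> x_size _ x_greedy]]] :=
  @next_appends n k k [::] (phi_d n k d) k_ge2 (leqnn k) (esym (subnn k)) nil_valid.
by apply: enum_invariant_cons => // p p_lt; apply: x_greedy; rewrite subnn.
Qed.

(* The mixed-radix expansion of [u] in the bases t_(L-1), ..., t_0: the label
   (alpha_L, ..., alpha_0) of the vertex of DCell_L with uid_L = u. *)
Fixpoint dcell_label n L u : seq nat :=
  if L is L'.+1 then u %/ t n L' :: dcell_label n L' (u %% t n L') else [:: u].

Lemma size_dcell_label n L u : size (dcell_label n L u) = L.+1.
Proof. by elim: L u => [|L IHL] u //=; rewrite IHL. Qed.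

Lemma dcell_label_last n L u : 0 < n -> u < t n L -> nth 0 (dcell_label n L u) L < n.
Proof. by move=> n_gt0; elim: L u => [|L IHL] u //= u_lt; rewrite IHL // ltn_pmod ?t_gt0. Qed.

Lemma dcell_label_bound n L u j : 0 < n -> u < t n L -> 1 <= j <= L ->
  nth 0 (dcell_label n L u) (L - j) <= t n j.-1.
Proof.
move=> n_gt0; elim: L u => [|L IHL] u u_lt /andP [j_ge1 j_le].
  by move: (leq_trans j_ge1 j_le).
have [j_lt | j_eq] := ltnP j L.+1; last first.
  have {j_le j_eq} -> : j = L.+1 by apply/eqP; rewrite eqn_leq j_le.
  by rewrite subnn -ltnS ltn_divLR ?t_gt0 // mulnC -tS.
rewrite (_ : L.+1 - j = (L - j).+1); last by rewrite subSn // -ltnS.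
apply: IHL; first by rewrite ltn_pmod ?t_gt0.
by rewrite j_ge1 -ltnS.
Qed.

Lemma dcell_label_uid n L u :
  nth 0 (dcell_label n L u) L +
  \sum_(1 <= q < L.+1) nth 0 (dcell_label n L u) (L - q) * t n q.-1 = u.
Proof.
elim: L u => [|L IHL] u; first by rewrite big_geq // addn0.
rewrite big_nat_recr //= subnn /=.
rewrite (@eq_big_nat _ _ _ 1 L.+1 _
  (fun q => nth 0 (dcell_label n L (u %% t n L)) (L - q) * t n q.-1)).
  by rewrite addnA IHL addnC -divn_eq.
by move=> q /andP [q_ge1 q_le]; rewrite subSn.
Qed.

Lemma dcell_label_small n L u : 0 < n -> u < t n 1 -> 1 <= L ->
  take L.-1 (dcell_label n L u) = nseq L.-1 0.
Proof.
move=> n_gt0 u_lt; elim: L => [|[|L] IHL] // _.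
have u_lt' : u < t n L.+1 by apply: leq_trans u_lt (leq_t _ _).
by rewrite [dcell_label _ _ _]/= divn_small // modn_small //= IHL.
Qed.

Lemma dcell1_index_take n k v : is_vertex n k v -> dcell1_index n k (take k.-1 v).
Proof.
case=> v_size _ v_lt; split=> [|q q_lt]; first by rewrite size_takel // v_size; lia.
rewrite nth_take //; have := v_lt (k - q); rewrite /alpha /a (_ : k - (k - q) = q) //; last by lia.
by rewrite ltnS; apply; lia.
Qed.

(* Sufficient for the copy [g] of D_l to contain its vertex with uid_l = u. *)
Definition uid_in_copy n k phi g u : Prop :=
  full_prefix n k phi g \/ (u < t n 1 /\ has_prefix phi g).

Definition copy_vertex n (al : seq nat) c l u := al ++ c :: dcell_label n l u.

Section CopyVertex.

Variables (n k l d : nat) (al : seq nat).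
Hypotheses (al_size : size al = k - l.+1) (l_lt : l < k).

Lemma alpha_copy_vertex c u j : j <= k ->
  alpha k (copy_vertex n al c l u) j =
  if j <= l then nth 0 (dcell_label n l u) (l - j)
  else if j == l.+1 then c else nth 0 al (k - j).
Proof.
move=> j_le; rewrite /alpha /copy_vertex nth_cat al_size.
case: (leqP j l) => [j_le_l | j_gt_l].
  rewrite ifF; last by apply/negbTE; rewrite -leqNgt; lia.
  by rewrite (_ : k - j - (k - l.+1) = (l - j).+1) //; lia.
case: eqP => [-> | j_ne]; last by rewrite ifT //; apply/idP; lia.
by rewrite ifF ?subnn //; apply/negbTE; rewrite ltnn.
Qed.

Lemma uid_copy_vertex c u : uid n k (copy_vertex n al c l u) l = u.
Proof.
rewrite /uid alpha_copy_vertex // subn0 -[RHS](dcell_label_uid n l u); congr (_ + _).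
by apply: eq_big_nat => q /andP [q_ge1 q_le]; rewrite alpha_copy_vertex ?ifT //; lia.
Qed.

Lemma take_copy_vertex c u : take (size (rcons al c)) (copy_vertex n al c l u) = rcons al c.
Proof. by rewrite /copy_vertex -cat1s catA cats1 take_size_cat. Qed.

Lemma sub_nonempty_copy c : 1 <= l -> sub_nonempty n k d (rcons al c) ->
  has_prefix (phi_d n k d) (rcons al c) /\ c <= t n l.
Proof.
move=> l_ge1 [v [[[v_size _ v_lt] v_phi] v_al]]; split.
  by apply/hasP; exists (take k.-1 v) => //; rewrite take_takel ?v_al // size_rcons al_size; lia.
have := v_lt l.+1; rewrite /alpha -(nth_take 0 (_ : k - l.+1 < size (rcons al c))).
  by rewrite v_al nth_rcons -al_size ltnn eqxx; apply; lia.
by rewrite size_rcons al_size.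
Qed.

Hypotheses (n_gt0 : 0 < n) (al_valid : valid_prefix n k al).

Lemma is_vertex_copy_vertex c u :
  c <= t n l -> u < t n l -> is_vertex n k (copy_vertex n al c l u).
Proof.
move=> c_le u_lt; split.
- by rewrite size_cat /= size_dcell_label al_size; lia.
- by rewrite alpha_copy_vertex // subn0; apply: dcell_label_last.
move=> j /andP [j_ge1 j_le]; rewrite alpha_copy_vertex //.
case: ifP => [j_le_l | /negbT j_gt_l]; first by apply: dcell_label_bound; rewrite ?j_ge1.
case: eqP => [-> // | j_ne].
have := @al_valid (k - j); rewrite /a (_ : k - (k - j) = j); [apply; lia | lia].
Qed.

Hypotheses (l_ge1 : 1 <= l) (phi_inv : enum_invariant n k (phi_d n k d)).

Lemma dcell1_of_copy_vertex c u :
  take k.-1 (copy_vertex n al c l u) = rcons al c ++ take l.-1 (dcell_label n l u).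
Proof.
rewrite /copy_vertex take_cat al_size ifF; last by lia.
by rewrite cat_rcons (_ : k.-1 - (k - l.+1) = l.-1.+1) //; lia.
Qed.

Lemma copy_vertex_in_sub c u : c <= t n l -> u < t n l ->
  uid_in_copy n k (phi_d n k d) (rcons al c) u ->
  in_sub n k d (rcons al c) (copy_vertex n al c l u).
Proof.
move=> c_le u_lt alc_holds; have v_vertex := is_vertex_copy_vertex c_le u_lt.
split; last exact: take_copy_vertex; split=> //.
case: alc_holds => [alc_full | [u_small alc_ne]].
  apply: alc_full; first exact: dcell1_index_take.
  by rewrite take_takel ?take_copy_vertex // size_rcons al_size; lia.
rewrite dcell1_of_copy_vertex // dcell_label_small //.
rewrite (_ : l.-1 = k.-1 - size (rcons al c)); last by rewrite size_rcons al_size; lia.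
exact: (zero_completion_mem phi_inv).
Qed.

Lemma linked_copies i j : i < j -> j <= t n l ->
  uid_in_copy n k (phi_d n k d) (rcons al i) j.-1 ->
  uid_in_copy n k (phi_d n k d) (rcons al j) i ->
  linked n k d (rcons al i) (rcons al j).
Proof.
move=> ij j_le ali_holds alj_holds.
have i_lt : i < t n l := leq_trans ij j_le.
have u_lt : j.-1 < t n l by rewrite (ltn_predK ij).
have u_in := copy_vertex_in_sub (ltnW i_lt) u_lt ali_holds.
have v_in := copy_vertex_in_sub j_le i_lt alj_holds.
exists (copy_vertex n al i l j.-1), (copy_vertex n al j l i); split=> //.
split; first by case: u_in => [[]].
split; first by case: v_in => [[]].
exists l.+1; split=> //; left; split=> [p /andP [p_gt p_le] | /=].
  by rewrite !alpha_copy_vertex // !ifF //; lia.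
by rewrite !alpha_copy_vertex // ltnn eqxx !uid_copy_vertex.
Qed.

End CopyVertex.

Lemma linked_sym n k d g1 g2 : linked n k d g1 g2 -> linked n k d g2 g1.
Proof.
by case=> u [v [u_in v_in [u_vx [v_vx [j [j_le e]]]]]]; exists v, u; split=> //;
  split=> //; split=> //; exists j; split=> //; rewrite or_comm.
Qed.

Lemma uid_in_copy_below n k phi g i m u : enum_invariant n k phi ->
  has_prefix phi (rcons g m) -> i < m -> u < m -> uid_in_copy n k phi (rcons g i) u.
Proof.
case=> down full _ gm_ne im um; have [t1_lt | m_le] := ltnP (t n 1) m.
  by left; apply: full gm_ne.
by right; split; [lia | apply: down gm_ne].
Qed.

Theorem lemma8 (n k d l m : nat) (alpha' : seq nat) :
  2 <= n ->
  1 <= l -> l.+2 <= k ->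
  (* alpha' = alpha_k ... alpha_{l+2}, with alpha_j in [a_j] *)
  size alpha' = k - l.+1 ->
  (forall p, p < size alpha' -> nth 0 alpha' p < a n (k - p)) ->
  (* m is the largest integer with D_{d,l}^{alpha' m} non-empty *)
  sub_nonempty n k d (rcons alpha' m) ->
  (forall m', m < m' -> ~ sub_nonempty n k d (rcons alpha' m')) ->
  (forall i j, i < j < m -> linked n k d (rcons alpha' i) (rcons alpha' j)) /\
  (exists s : seq nat,
      [/\ uniq s, minn m (t n 1) <= size s &
          forall i, i \in s -> i < m /\ linked n k d (rcons alpha' m) (rcons alpha' i)]).
Proof.
move=> n_ge2 l_ge1 k_gt al_size al_valid m_ne _.
have n_gt0 : 0 < n := ltnW n_ge2.
have l_lt : l < k := ltnW k_gt.
have phi_inv := @enum_invariant_phi_d n k d ltac:(lia).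
have [m_prefix m_le] := sub_nonempty_copy al_size l_lt l_ge1 m_ne.
split.
  move=> i j /andP [ij jm]; apply: (linked_copies al_size l_lt) => //.
  - exact: leq_trans (ltnW jm) m_le.
  - by apply: (uid_in_copy_below phi_inv m_prefix); lia.
  - by apply: (uid_in_copy_below phi_inv m_prefix); lia.
exists (iota 0 (minn m (t n 1))); split; [exact: iota_uniq | by rewrite size_iota |].
move=> i; rewrite mem_iota add0n leq_min => /andP [_ /andP [im it1]]; split=> //.
apply: linked_sym; apply: (linked_copies al_size l_lt) => //; last by right.
by apply: (uid_in_copy_below phi_inv m_prefix); lia.
Qed.
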